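(* Let $A$ be a unital associative algebra over $k$ with unit $1$, let $\rho:A\to A$ be linear with curvature $\omega(x,y)=\rho(xy)-\rho(x)\rho(y)$, and suppose that for all $x,y\in A$ $$x\,\omega(1,y)-x\,\omega(1,1)\,y-\omega(x,y)+\omega(x,1)\,y=0.$$ Then: (i) if $\rho(1)=1$, $\rho$ is an algebra homomorphism; (ii) if $\rho(1)=0$, $\rho$ is an Ito derivative.
   Context: $k=\mathbb{R}$ or $\mathbb{C}$. An Ito derivative is a linear map $d:A\to A$ with $d(1)=0$ and $d(xy)=d(x)y+xd(y)+d(x)d(y)$ for all $x,y\in A$. *)

From mathcomp Require Import all_boot all_order all_algebra.
Set Implicit Arguments. Unset Strict Implicit. Unset Printing Implicit Defensive.
Import GRing.Theory.
Local Open Scope ring_scope.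

Definition curvature (k : fieldType) (A : algType k) (rho : A -> A) (x y : A) : A :=
  rho (x * y) - rho x * rho y.

Definition is_alg_hom (k : fieldType) (A : algType k) (f : A -> A) : Prop :=
  linear f /\ f 1 = 1 /\ (forall x y : A, f (x * y) = f x * f y).

Definition is_Ito_derivative (k : fieldType) (A : algType k) (d : A -> A) : Prop :=
  linear d /\ d 1 = 0 /\
  (forall x y : A, d (x * y) = d x * y + x * d y + d x * d y).

From mathcomp Require Import all_boot all_order all_algebra.
Import GRing.Theory.
Local Open Scope ring_scope.

(* The hypothesis expresses [omega(x, y)] through curvatures with a unit argument,
   and these only depend on [rho 1]: they all vanish when [rho 1 = 1], while for
   [rho 1 = 0] they reduce to [omega(1, y) = rho y], [omega(x, 1) = rho x] and
   [omega(1, 1) = 0], which is exactly the Ito product rule. *)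

Section CurvatureWithUnit.

Variables (k : fieldType) (A : algType k) (rho : A -> A).

Lemma curvature1x (y : A) : curvature rho 1 y = rho y - rho 1 * rho y.
Proof. by rewrite /curvature mul1r. Qed.

Lemma curvaturex1 (x : A) : curvature rho x 1 = rho x - rho x * rho 1.
Proof. by rewrite /curvature mulr1. Qed.

Lemma curvature1x_unital (y : A) : rho 1 = 1 -> curvature rho 1 y = 0.
Proof. by move=> rho1; rewrite curvature1x rho1 mul1r subrr. Qed.

Lemma curvaturex1_unital (x : A) : rho 1 = 1 -> curvature rho x 1 = 0.
Proof. by move=> rho1; rewrite curvaturex1 rho1 mulr1 subrr. Qed.

Lemma curvature1x_counital (y : A) : rho 1 = 0 -> curvature rho 1 y = rho y.
Proof. by move=> rho0; rewrite curvature1x rho0 mul0r subr0. Qed.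

Lemma curvaturex1_counital (x : A) : rho 1 = 0 -> curvature rho x 1 = rho x.
Proof. by move=> rho0; rewrite curvaturex1 rho0 mulr0 subr0. Qed.

Hypothesis curvature_cond : forall x y : A,
  x * curvature rho 1 y - x * curvature rho 1 1 * y
  - curvature rho x y + curvature rho x 1 * y = 0.

Lemma curvature_unit_expansion (x y : A) :
  curvature rho x y =
  x * curvature rho 1 y - x * curvature rho 1 1 * y + curvature rho x 1 * y.
Proof. by apply/esym/eqP; rewrite -subr_eq0 addrAC curvature_cond. Qed.

Lemma curvature_unital (x y : A) : rho 1 = 1 -> curvature rho x y = 0.
Proof.
move=> rho1; rewrite curvature_unit_expansion !curvature1x_unital //.
by rewrite curvaturex1_unital // !(mulr0, mul0r, subrr, addr0).
Qed.

Lemma curvature_counital (x y : A) :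
  rho 1 = 0 -> curvature rho x y = rho x * y + x * rho y.
Proof.
move=> rho0; rewrite curvature_unit_expansion !curvature1x_counital //.
by rewrite curvaturex1_counital // rho0 mulr0 mul0r subr0 addrC.
Qed.

End CurvatureWithUnit.

Theorem mainTheorem5 (k : fieldType) (A : algType k) (rho : A -> A)
  (hlin : linear rho)
  (hcond : forall x y : A,
     x * curvature rho 1 y - x * curvature rho 1 1 * y
     - curvature rho x y + curvature rho x 1 * y = 0) :
  (rho 1 = 1 -> is_alg_hom rho) /\ (rho 1 = 0 -> is_Ito_derivative rho).
Proof.
split=> rho1; do 2!split=> //; move=> x y; apply/eqP.
  by rewrite -subr_eq0; apply/eqP/curvature_unital.
by rewrite -subr_eq; apply/eqP/curvature_counital.
Qed.
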